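(* (1) If $\varphi:(\mathbb R\times\mathbb R^n,(0,0))\to(\mathbb R^2\times\mathbb R^n,(0,0))$ is a map-germ of pedal unfolding type, then its integration $\mathcal I(\varphi)$ is a normalized Legendrian map-germ. (2) If $\Phi:(\mathbb R\times\mathbb R^n,(0,0))\to(\mathbb R^2\times\mathbb R^n,(0,0))$ is a normalized Legendrian map-germ, then its differential $\mathcal D(\Phi)$ is a map-germ of pedal unfolding type.
   Context: All maps are $C^\infty$. A map-germ $\Phi:(\mathbb R^m,0)\to(\mathbb R^{m+1},0)$ is Legendrian if there is a germ of unit vector field $\nu_\Phi$ along $\Phi$ with $\frac{\partial\Phi}{\partial x_j}\cdot\nu_\Phi=0$ for $j=1,\dots,m$ and such that $(\Phi,\nu_\Phi):(\mathbb R^m,0)\to T_1\mathbb R^{m+1}=\mathbb R^{m+1}\times S^m$ is non-singular (an immersion). A Legendrian germ $\Phi:(\mathbb R\times\mathbb R^n,(0,0))\to(\mathbb R^2\times\mathbb R^n,(0,0))$ is normalized if (i) $\Phi(x,y)=(\Phi_1(x,y),\Phi_2(x,y),y)$, $y=(y_1,\dots,y_n)$; (ii) $\frac{\partial\Phi_2}{\partial x}(0,0)=0$; (iii) $\nu_\Phi(0,0)=\pm\frac{\partial}{\partial X_1}$ for some choice of $\nu_\Phi$, where $(X_1,X_2,Y_1,\dots,Y_n)$ are standard coordinates on the target. A map-germ $\varphi$ is of pedal unfolding type if $\varphi(x,y)=(n(x,y)p(x,y),p(x,y),y)$ with function-germs $n,p:(\mathbb R\times\mathbb R^n,(0,0))\to(\mathbb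 R,0)$ and $\frac{\partial n}{\partial x}(0,0)\neq0$. The integration of such $\varphi$ is $\mathcal I(\varphi)(x,y)=\big(\int_0^x n(t,y)p(t,y)\,dt,\ \int_0^x p(t,y)\,dt,\ y\big)$. The differential of a normalized Legendrian $\Phi$ is $\mathcal D(\Phi)(x,y)=\big(\frac{\partial\Phi_1}{\partial x}(x,y),\frac{\partial\Phi_2}{\partial x}(x,y),y\big)$. *)

From Stdlib Require Import Reals Lra ClassicalEpsilon.
From Stdlib Require Vectors.Fin.
Open Scope R_scope.

Definition Dom (n : nat) : Type := (R * (Fin.t n -> R))%type.
Definition Tgt (n : nat) : Type := (R * R * (Fin.t n -> R))%type.

Definition origin {n : nat} : Dom n := (0, fun _ => 0).

Definition box {n : nat} (r : R) (q : Dom n) : Prop :=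
  Rabs (fst q) < r /\ forall i, Rabs (snd q i) < r.

(* Directions of partial derivatives: None = d/dx, Some i = d/dy_i. *)
Definition shift {n : nat} (q : Dom n) (d : option (Fin.t n)) (h : R) : Dom n :=
  match d with
  | None => (fst q + h, snd q)
  | Some i => (fst q, fun j => if Fin.eq_dec i j then snd q j + h else snd q j)
  end.

Definition has_pd {n : nat} (f : Dom n -> R) (d : option (Fin.t n)) (q : Dom n) (l : R) : Prop :=
  derivable_pt_lim (fun h => f (shift q d h)) 0 l.

(* The partial derivative as a total function (0 where it does not exist). *)
Definition pd {n : nat} (f : Dom n -> R) (d : option (Fin.t n)) (q : Dom n) : R :=
  match excluded_middle_informative (exists l, has_pd f d q l) with
  | left H => proj1_sig (constructive_indefinite_description _ H)
  | right _ => 0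
  end.

Definition cont_on {n : nat} (U : Dom n -> Prop) (f : Dom n -> R) : Prop :=
  forall q, U q -> forall eps, 0 < eps -> exists delta, 0 < delta /\
    forall q', Rabs (fst q' - fst q) < delta ->
               (forall i, Rabs (snd q' i - snd q i) < delta) ->
               Rabs (f q' - f q) < eps.

Fixpoint Ck {n : nat} (k : nat) (U : Dom n -> Prop) (f : Dom n -> R) : Prop :=
  match k with
  | O => cont_on U f
  | S k' => cont_on U f /\
      forall d, (forall q, U q -> exists l, has_pd f d q l) /\ Ck k' U (pd f d)
  end.

Definition smooth_germ {n : nat} (f : Dom n -> R) : Prop :=
  exists r, 0 < r /\ forall k, Ck k (box r) f.

Definition c1 {n : nat} (F : Dom n -> Tgt n) (q : Dom n) : R := fst (fst (F q)).
Definition c2 {n : nat} (F : Dom n -> Tgt n) (q : Dom n) : R := snd (fst (F q)).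
Definition cy {n : nat} (F : Dom n -> Tgt n) (i : Fin.t n) (q : Dom n) : R := snd (F q) i.

Definition smooth_map_germ {n : nat} (F : Dom n -> Tgt n) : Prop :=
  smooth_germ (c1 F) /\ smooth_germ (c2 F) /\ forall i, smooth_germ (cy F i).

Fixpoint sumFin (n : nat) : (Fin.t n -> R) -> R :=
  match n with
  | O => fun _ => 0
  | S m => fun f => f Fin.F1 + sumFin m (fun i => f (Fin.FS i))
  end.

Definition dotT {n : nat} (u v : Tgt n) : R :=
  fst (fst u) * fst (fst v) + snd (fst u) * snd (fst v)
  + sumFin n (fun i => snd u i * snd v i).

Definition pdT {n : nat} (F : Dom n -> Tgt n) (d : option (Fin.t n)) (q : Dom n) : Tgt n :=
  (pd (c1 F) d q, pd (c2 F) d q, fun i => pd (cy F i) d q).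

Definition lin {n : nat} (c : option (Fin.t n) -> R) (w : option (Fin.t n) -> R) : R :=
  c None * w None + sumFin n (fun i => c (Some i) * w (Some i)).

Definition dR0 {n : nat} (f : Dom n -> R) (c : option (Fin.t n) -> R) : R :=
  lin c (fun d => pd f d origin).

Definition immersive_pair_at0 {n : nat} (F nu : Dom n -> Tgt n) : Prop :=
  forall c : option (Fin.t n) -> R,
    dR0 (c1 F) c = 0 -> dR0 (c2 F) c = 0 -> (forall i, dR0 (cy F i) c = 0) ->
    dR0 (c1 nu) c = 0 -> dR0 (c2 nu) c = 0 -> (forall i, dR0 (cy nu i) c = 0) ->
    forall d, c d = 0.

Definition legendrian_field {n : nat} (F nu : Dom n -> Tgt n) : Prop :=
  smooth_map_germ nu /\
  (exists r, 0 < r /\ forall q, box r q ->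
      dotT (nu q) (nu q) = 1 /\ forall d, dotT (pdT F d q) (nu q) = 0) /\
  immersive_pair_at0 F nu.

Definition tgt0 {n : nat} : Tgt n := (0, 0, fun _ => 0).

Definition legendrian {n : nat} (F : Dom n -> Tgt n) : Prop :=
  smooth_map_germ F /\ F origin = tgt0 /\ exists nu, legendrian_field F nu.

Definition e1 {n : nat} : Tgt n := (1, 0, fun _ => 0).
Definition me1 {n : nat} : Tgt n := (-1, 0, fun _ => 0).

Definition normalized_legendrian {n : nat} (F : Dom n -> Tgt n) : Prop :=
  legendrian F /\
  (exists r, 0 < r /\ forall q, box r q -> snd (F q) = snd q) /\
  pd (c2 F) None origin = 0 /\
  (exists nu, legendrian_field F nu /\ (nu origin = e1 \/ nu origin = me1)).

Definition pedal_data {n : nat} (nf pf : Dom n -> R) : Prop :=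
  smooth_germ nf /\ smooth_germ pf /\ nf origin = 0 /\ pf origin = 0 /\
  pd nf None origin <> 0.

Definition pedal_map {n : nat} (nf pf : Dom n -> R) (q : Dom n) : Tgt n :=
  (nf q * pf q, pf q, snd q).

Definition germ_eq {n : nat} (F G : Dom n -> Tgt n) : Prop :=
  exists r, 0 < r /\ forall q, box r q -> F q = G q.

Definition pedal_unfolding_type {n : nat} (phi : Dom n -> Tgt n) : Prop :=
  exists nf pf, pedal_data nf pf /\ germ_eq phi (pedal_map nf pf).

(* Oriented Riemann integral int_a^b f (0 if f is not Riemann integrable). *)
Definition Rint (f : R -> R) (a b : R) : R :=
  match excluded_middle_informative (exists pr : Riemann_integrable f a b, True) with
  | left H => RiemannInt (proj1_sig (constructive_indefinite_description _ H))
  | right _ => 0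
  end.

Definition integration {n : nat} (nf pf : Dom n -> R) (q : Dom n) : Tgt n :=
  (Rint (fun t => nf (t, snd q) * pf (t, snd q)) 0 (fst q),
   Rint (fun t => pf (t, snd q)) 0 (fst q),
   snd q).

Definition differential {n : nat} (F : Dom n -> Tgt n) (q : Dom n) : Tgt n :=
  (pd (c1 F) None q, pd (c2 F) None q, snd q).

From Pilot Require Import Defs.
From Stdlib Require Import Reals Lra Lia ClassicalEpsilon FunctionalExtensionality Classical.
From Coquelicot Require Import Coquelicot.
(* Re-import so that [Defs.c1] takes precedence over [RiemannInt.c1]. *)
Import Pilot.Defs.
Open Scope R_scope.

(** For [phi = (n p, p, y)] the integration
  [I(phi) = (int_0^x n p, int_0^x p, y)] is smooth because [C^k] on a box is
  stable under sums, products, quotients, square roots and partial integration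
  in [x] (fundamental theorem of calculus in [x], differentiation under the
  integral sign in [y]).  A unit normal field is
  [nu = (1, -n, w) / sqrt (1 + n^2 + |w|^2)] with
  [w_i = n d_{y_i} Phi_2 - d_{y_i} Phi_1]; it equals [e1] at the origin, and
  [(Phi, nu)] is an immersion there: the [y]-components of [Phi] detect the
  [y]-directions, and [d_x nu_2 (0) = - d_x n (0) <> 0] detects [x].

  For a normalized Legendrian [Phi] with field [nu],
  [nu(0) = +- e1], so [nu_1] does not vanish near [0]; put [n = - nu_2 / nu_1]
  and [p = d_x Phi_2].  Orthogonality of [nu] to [d_x Phi] gives
  [d_x Phi_1 = n p], so [D(Phi) = (n p, p, y)].  If [d_x n (0)] vanished, then
  [d_x nu_2 (0) = 0]; the unit length of [nu] gives [d_x nu_1 (0) = 0];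
  orthogonality to [d_{y_i} Phi] and the symmetry of second derivatives give
  [d_x nu_{y_i} (0) = 0]; together with [d_x Phi (0) = 0] the direction [d_x]
  would lie in the kernel of [d(Phi, nu)(0)], contradicting immersivity. *)

Lemma Rmin_lt_inv x y z : z < Rmin x y -> z < x /\ z < y.
Proof. intros H. pose proof (Rmin_l x y). pose proof (Rmin_r x y). lra. Qed.

Lemma fin_bound n (y : Fin.t n -> R) r :
  (forall i, Rabs (y i) < r) -> exists m, m < r /\ forall i, Rabs (y i) <= m.
Proof.
  induction n as [|n IH].
  - intros _. exists (r - 1). split; [lra | intros i; inversion i].
  - intros H. destruct (IH (fun i => y (Fin.FS i))) as [m [Hm Hi]].
    { intros i; apply H. }
    exists (Rmax m (Rabs (y Fin.F1))). split.
    + apply Rmax_lub_lt; auto.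
    + intros i. apply (Fin.caseS' i (fun i => Rabs (y i) <= Rmax m (Rabs (y Fin.F1)))).
      * apply Rmax_r.
      * intros p. eapply Rle_trans; [apply Hi | apply Rmax_l].
Qed.

Lemma box_margin {n} r (q : Dom n) : box r q ->
  exists m, 0 < m /\ forall q', Rabs (fst q' - fst q) < m ->
     (forall i, Rabs (snd q' i - snd q i) < m) -> box r q'.
Proof.
  intros [H1 H2]. destruct (fin_bound n (snd q) r H2) as [m [Hm Hi]].
  exists (Rmin (r - m) (r - Rabs (fst q))). split.
  - apply Rmin_pos; lra.
  - pose proof (Rmin_l (r - m) (r - Rabs (fst q))).
    pose proof (Rmin_r (r - m) (r - Rabs (fst q))).
    intros q' Hx Hy. split.
    + pose proof (Rabs_triang (fst q' - fst q) (fst q)).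
      replace (fst q' - fst q + fst q) with (fst q') in * by ring. lra.
    + intros i. specialize (Hy i). specialize (Hi i).
      pose proof (Rabs_triang (snd q' i - snd q i) (snd q i)).
      replace (snd q' i - snd q i + snd q i) with (snd q' i) in * by ring. lra.
Qed.

Lemma box_mono {n} r r' (q : Dom n) : r' <= r -> box r' q -> box r q.
Proof. intros H [A B]. split; [lra | intros i; specialize (B i); lra]. Qed.

Lemma origin_box {n} r : 0 < r -> box r (@origin n).
Proof. intros H. split; simpl; [|intros]; rewrite Rabs_R0; auto. Qed.

Lemma box_x0 {n} r x (y : Fin.t n -> R) : box r (x, y) -> box r (0, y).
Proof. intros [Hx Hy]. split; auto. simpl in *. rewrite Rabs_R0. pose proof (Rabs_pos x). lra. Qed.

Lemma segment_abs x t : Rmin 0 x <= t <= Rmax 0 x -> Rabs t <= Rabs x.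
Proof.
  intros Ht. destruct (Rle_dec 0 x).
  - rewrite Rmin_left, Rmax_right in Ht by lra. rewrite !Rabs_right by lra. lra.
  - rewrite Rmin_right, Rmax_left in Ht by lra. rewrite !Rabs_left1 by lra. lra.
Qed.

Lemma seg_box {n} r a b (y : Fin.t n -> R) t : box r (a, y) -> box r (b, y) ->
  Rmin a b <= t <= Rmax a b -> box r (t, y).
Proof.
  intros [Ha Hy] [Hb _] Ht. split; auto. simpl in *.
  apply Rabs_def2 in Ha. apply Rabs_def2 in Hb. apply Rabs_def1.
  - pose proof (Rmax_lub_lt a b r ltac:(lra) ltac:(lra)). lra.
  - pose proof (Rmin_glb_lt a b (-r) ltac:(lra) ltac:(lra)). lra.
Qed.

Lemma locR (x : R) (P : R -> Prop) :
  (exists e, 0 < e /\ forall y, Rabs (y - x) < e -> P y) -> locally x P.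
Proof. intros [e [He H]]. exists (mkposreal e He). intros y Hy. apply H. exact Hy. Qed.

Lemma shift0 {n} (q : Dom n) d : shift q d 0 = q.
Proof.
  destruct q as [x y]. destruct d as [i|]; simpl.
  - f_equal. apply functional_extensionality. intros j. destruct Fin.eq_dec; ring.
  - f_equal. ring.
Qed.

Lemma shift_close {n} (q : Dom n) d h :
  Rabs (fst (shift q d h) - fst q) <= Rabs h /\
  forall i, Rabs (snd (shift q d h) i - snd q i) <= Rabs h.
Proof.
  destruct d as [j|]; simpl; split.
  - rewrite Rminus_diag, Rabs_R0. apply Rabs_pos.
  - intros i. destruct (Fin.eq_dec j i).
    + replace (snd q i + h - snd q i) with h by ring. lra.
    + rewrite Rminus_diag, Rabs_R0. apply Rabs_pos.
  - replace (fst q + h - fst q) with h by ring. lra.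
  - intros i. rewrite Rminus_diag, Rabs_R0. apply Rabs_pos.
Qed.

Lemma box_shift {n} r (q : Dom n) d : box r q ->
  exists e, 0 < e /\ forall h, Rabs h < e -> box r (shift q d h).
Proof.
  intros Hq. destruct (box_margin r q Hq) as [m [Hm H]].
  exists m. split; auto. intros h Hh. destruct (shift_close q d h) as [A B].
  apply H; [lra | intros i; specialize (B i); lra].
Qed.

Lemma has_pd_pd {n} (f : Dom n -> R) d q l : has_pd f d q l -> pd f d q = l.
Proof.
  intros H. unfold pd. destruct excluded_middle_informative as [E|E].
  - destruct constructive_indefinite_description as [l' Hl']. simpl.
    eapply uniqueness_limite; eauto.
  - exfalso. apply E. eauto.
Qed.

Lemma has_pd_ext {n} r (f g : Dom n -> R) d q l :
  box r q -> (forall q', box r q' -> f q' = g q') -> has_pd f d q l -> has_pd g d q l.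
Proof.
  intros Hq Hfg H. unfold has_pd in *. apply is_derive_Reals. apply is_derive_Reals in H.
  eapply is_derive_ext_loc; [|exact H]. apply locR.
  destruct (box_shift r q d Hq) as [e [He He']]. exists e. split; auto.
  intros y Hy. apply Hfg. apply He'. rewrite Rminus_0_r in Hy. exact Hy.
Qed.

Lemma pd_ext {n} r (f g : Dom n -> R) d q :
  box r q -> (forall q', box r q' -> f q' = g q') -> pd f d q = pd g d q.
Proof.
  intros Hq Hfg. destruct (classic (exists l, has_pd f d q l)) as [[l Hl]|N].
  - rewrite (has_pd_pd _ _ _ _ Hl). symmetry. apply has_pd_pd. eapply has_pd_ext; eauto.
  - unfold pd. destruct excluded_middle_informative as [E|E]; [contradiction|].
    destruct excluded_middle_informative as [[l Hl]|E']; auto.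
    exfalso. apply N. exists l.
    apply (has_pd_ext r g f d q l Hq); [intros; symmetry; auto | exact Hl].
Qed.

Lemma dpl_xh c : derivable_pt_lim (fun h => c + h) 0 1.
Proof.
  pose proof (derivable_pt_lim_plus (fun _ => c) (fun h => h) 0 0 1
    (derivable_pt_lim_const c 0) (derivable_pt_lim_id 0)) as H.
  rewrite Rplus_0_l in H. exact H.
Qed.

(** The derivative of the coordinate [y_j] in the direction [d]. *)
Definition dsnd {n} (d : option (Fin.t n)) (j : Fin.t n) : R :=
  match d with None => 0 | Some i => if Fin.eq_dec i j then 1 else 0 end.

Lemma has_pd_const {n} c d (q : Dom n) : has_pd (fun _ => c) d q 0.
Proof. unfold has_pd. apply derivable_pt_lim_const. Qed.

Lemma has_pd_snd {n} j d (q : Dom n) : has_pd (fun q => snd q j) d q (dsnd d j).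
Proof.
  unfold has_pd. destruct d as [i|]; simpl.
  - destruct (Fin.eq_dec i j); [apply dpl_xh | apply derivable_pt_lim_const].
  - apply derivable_pt_lim_const.
Qed.

Lemma has_pd_plus {n} (f g : Dom n -> R) d q a b :
  has_pd f d q a -> has_pd g d q b -> has_pd (fun q => f q + g q) d q (a + b).
Proof. apply derivable_pt_lim_plus. Qed.

Lemma has_pd_opp {n} (f : Dom n -> R) d q a :
  has_pd f d q a -> has_pd (fun q => - f q) d q (- a).
Proof. apply derivable_pt_lim_opp. Qed.

Lemma has_pd_mult {n} (f g : Dom n -> R) d q a b :
  has_pd f d q a -> has_pd g d q b -> has_pd (fun q => f q * g q) d q (a * g q + f q * b).
Proof.
  unfold has_pd. intros Hf Hg.
  pose proof (derivable_pt_lim_mult _ _ 0 a b Hf Hg) as H.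
  cbv beta in H. rewrite shift0 in H. exact H.
Qed.

Lemma has_pd_comp {n} (phi : R -> R) (f : Dom n -> R) d q a b :
  has_pd f d q a -> derivable_pt_lim phi (f q) b -> has_pd (fun q => phi (f q)) d q (b * a).
Proof.
  unfold has_pd. intros Hf Hp. rewrite <- (shift0 q d) in Hp at 1.
  exact (derivable_pt_lim_comp (fun h => f (shift q d h)) phi 0 a b Hf Hp).
Qed.

Lemma has_pd_sumFin {n} m (F : Fin.t m -> Dom n -> R) (L : Fin.t m -> R) d q :
  (forall i, has_pd (F i) d q (L i)) ->
  has_pd (fun q => sumFin m (fun i => F i q)) d q (sumFin m L).
Proof.
  revert F L. induction m as [|m IH]; intros F L H; simpl.
  - apply has_pd_const.
  - apply has_pd_plus; [auto | apply (IH (fun i => F (Fin.FS i)) (fun i => L (Fin.FS i))); auto].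
Qed.

Lemma dpl_Rinv y : y <> 0 -> derivable_pt_lim Rinv y (- (/ y * / y)).
Proof.
  intros Hy. apply is_derive_Reals.
  pose proof (is_derive_inv (fun x => x) y 1 (is_derive_id y) Hy) as H.
  replace (- (/ y * / y)) with (- 1 / y ^ 2) by (field; auto). exact H.
Qed.

Definition contat {n} (f : Dom n -> R) (q : Dom n) : Prop :=
  forall eps, 0 < eps -> exists delta, 0 < delta /\
    forall q', Rabs (fst q' - fst q) < delta ->
               (forall i, Rabs (snd q' i - snd q i) < delta) ->
               Rabs (f q' - f q) < eps.

Lemma cont_on_at {n} U (f : Dom n -> R) : cont_on U f <-> forall q, U q -> contat f q.
Proof. unfold cont_on, contat. tauto. Qed.

Lemma cont_on_contat {n} U (f : Dom n -> R) : cont_on U f -> forall q, U q -> contat f q.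
Proof. apply cont_on_at. Qed.

Lemma contat_ext {n} r (f g : Dom n -> R) q : box r q ->
  (forall q', box r q' -> f q' = g q') -> contat f q -> contat g q.
Proof.
  intros Hq Hfg H eps He. destruct (H eps He) as [d [Hd Hd']].
  destruct (box_margin r q Hq) as [m [Hm Hm']].
  exists (Rmin d m). split; [apply Rmin_pos; auto|].
  pose proof (Rmin_l d m). pose proof (Rmin_r d m).
  intros q' Hx Hy. rewrite <- !Hfg; auto.
  - apply Hd'; [lra | intros i; specialize (Hy i); lra].
  - apply Hm'; [lra | intros i; specialize (Hy i); lra].
Qed.

Lemma contat_const {n} c (q : Dom n) : contat (fun _ => c) q.
Proof. intros eps He. exists 1. split; [lra|]. intros. rewrite Rminus_diag, Rabs_R0. auto. Qed.

Lemma contat_snd {n} j (q : Dom n) : contat (fun q => snd q j) q.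
Proof. intros eps He. exists eps. auto. Qed.

Lemma contat_binop {n} (op : R -> R -> R) (f g : Dom n -> R) q :
  (forall eps, 0 < eps -> exists delta, 0 < delta /\ forall a b,
     Rabs (a - f q) < delta -> Rabs (b - g q) < delta ->
     Rabs (op a b - op (f q) (g q)) < eps) ->
  contat f q -> contat g q -> contat (fun q => op (f q) (g q)) q.
Proof.
  intros Hop Hf Hg eps He. destruct (Hop eps He) as [d [Hd Hd']].
  destruct (Hf d Hd) as [d1 [Hd1 H1]]. destruct (Hg d Hd) as [d2 [Hd2 H2]].
  exists (Rmin d1 d2). split; [apply Rmin_pos; auto|].
  pose proof (Rmin_l d1 d2). pose proof (Rmin_r d1 d2).
  intros q' A B. apply Hd'.
  - apply H1; [lra | intros i; specialize (B i); lra].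
  - apply H2; [lra | intros i; specialize (B i); lra].
Qed.

Lemma contat_plus {n} (f g : Dom n -> R) q :
  contat f q -> contat g q -> contat (fun q => f q + g q) q.
Proof.
  apply contat_binop. intros eps He. exists (eps/2). split; [lra|]. intros a b A B.
  replace (a + b - (f q + g q)) with ((a - f q) + (b - g q)) by ring.
  eapply Rle_lt_trans; [apply Rabs_triang | lra].
Qed.

Lemma contat_mult {n} (f g : Dom n -> R) q :
  contat f q -> contat g q -> contat (fun q => f q * g q) q.
Proof.
  apply contat_binop. intros eps He.
  pose proof (Rabs_pos (f q)) as HA. pose proof (Rabs_pos (g q)) as HB.
  set (M := Rabs (f q) + Rabs (g q) + 1).
  set (dl := Rmin 1 (eps / M)).
  assert (Hdl1 : dl <= 1) by apply Rmin_l.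
  assert (Hdl : dl * M <= eps).
  { pose proof (Rmin_r 1 (eps / M)) as H. fold dl in H.
    apply (Rmult_le_compat_r M) in H; [|unfold M; lra].
    replace (eps / M * M) with eps in H by (unfold M; field; lra). exact H. }
  exists dl. split; [apply Rmin_pos; [lra | apply Rdiv_lt_0_compat; unfold M; lra]|].
  intros a b Ha Hb. unfold M in Hdl.
  replace (a * b - f q * g q)
    with ((a - f q) * (b - g q) + (a - f q) * g q + f q * (b - g q)) by ring.
  pose proof (Rabs_triang ((a - f q) * (b - g q) + (a - f q) * g q) (f q * (b - g q))).
  pose proof (Rabs_triang ((a - f q) * (b - g q)) ((a - f q) * g q)).
  rewrite !Rabs_mult in *.
  pose proof (Rabs_pos (a - f q)). pose proof (Rabs_pos (b - g q)). nra.
Qed.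

Lemma contat_comp {n} (phi : R -> R) (f : Dom n -> R) q :
  continuity_pt phi (f q) -> contat f q -> contat (fun q => phi (f q)) q.
Proof.
  intros Hp Hf eps He. destruct (Hp eps He) as [d [Hd Hd']].
  destruct (Hf d Hd) as [d1 [Hd1 H1]]. exists d1. split; auto.
  intros q' A B. destruct (Req_dec (f q') (f q)) as [E|E].
  - rewrite E, Rminus_diag, Rabs_R0. auto.
  - apply (Hd' (f q')). split; [split; [exact I | congruence] | apply H1; auto].
Qed.

(** ** The [C^k] calculus on a box *)

Section CkTheory.
Context {n : nat}.

Lemma Ck_cont k U (f : Dom n -> R) : Ck k U f -> cont_on U f.
Proof. destruct k; simpl; tauto. Qed.

Lemma Ck_weak k : forall U (f : Dom n -> R), Ck (S k) U f -> Ck k U f.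
Proof.
  induction k as [|k IH]; intros U f H.
  - exact (proj1 H).
  - destruct H as [Hc Hd]. split; auto. intros d. destruct (Hd d). split; auto.
Qed.

Lemma Ck_weak_le k m U (f : Dom n -> R) : (m <= k)%nat -> Ck k U f -> Ck m U f.
Proof. induction 1; auto. intros H'. apply IHle. apply Ck_weak. auto. Qed.

Lemma Ck_has_pd k r (f : Dom n -> R) d q :
  Ck (S k) (box r) f -> box r q -> has_pd f d q (pd f d q).
Proof.
  intros [_ H] Hq. destruct (proj1 (H d) q Hq) as [l Hl].
  rewrite (has_pd_pd _ _ _ _ Hl). exact Hl.
Qed.

Lemma Ck_pd k U (f : Dom n -> R) d : Ck (S k) U f -> Ck k U (pd f d).
Proof. intros [_ H]. apply (H d). Qed.

Lemma Ck_ext r k : forall (f g : Dom n -> R), (forall q, box r q -> f q = g q) ->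
  Ck k (box r) f -> Ck k (box r) g.
Proof.
  assert (C : forall f g : Dom n -> R, (forall q, box r q -> f q = g q) ->
            cont_on (box r) f -> cont_on (box r) g).
  { intros f g Hfg Hf. apply cont_on_at. intros q Hq.
    eapply contat_ext; eauto. apply cont_on_at with (U := box r); auto. }
  induction k as [|k IH]; intros f g Hfg H.
  - exact (C f g Hfg H).
  - destruct H as [Hc Hd]. split; [exact (C f g Hfg Hc)|].
    intros d. destruct (Hd d) as [E Ck']. split.
    + intros q Hq. destruct (E q Hq) as [l Hl]. exists l. eapply has_pd_ext; eauto.
    + apply (IH (pd f d)); auto. intros q Hq. eapply pd_ext; eauto.
Qed.

Lemma Ck_intro k r (f : Dom n -> R) (D : option (Fin.t n) -> Dom n -> R) :
  cont_on (box r) f -> (forall d q, box r q -> has_pd f d q (D d q)) ->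
  (forall d, Ck k (box r) (D d)) -> Ck (S k) (box r) f.
Proof.
  intros Hc Hd HD. split; auto. intros d. split.
  - intros q Hq. eauto.
  - apply (Ck_ext r k (D d)); auto. intros q Hq. symmetry. apply has_pd_pd. auto.
Qed.

Lemma Ck_mono k : forall (U V : Dom n -> Prop) (f : Dom n -> R), (forall q, V q -> U q) ->
  Ck k U f -> Ck k V f.
Proof.
  induction k as [|k IH]; intros U V f HUV H.
  - intros q Hq. apply H. auto.
  - destruct H as [Hc Hd]. split.
    + intros q Hq. apply Hc. auto.
    + intros d. destruct (Hd d). split; eauto.
Qed.

Variable r : R.

Lemma Ck_const k : forall c, Ck k (box r) (fun _ : Dom n => c).
Proof.
  induction k as [|k IH]; intros c.
  - apply cont_on_at. intros; apply contat_const.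
  - apply (Ck_intro k r _ (fun _ _ => 0)); auto.
    + apply cont_on_at. intros; apply contat_const.
    + intros; apply has_pd_const.
Qed.

Lemma Ck_snd k j : Ck k (box r) (fun q : Dom n => snd q j).
Proof.
  destruct k.
  - apply cont_on_at. intros; apply contat_snd.
  - apply (Ck_intro k r _ (fun d _ => dsnd d j)).
    + apply cont_on_at. intros; apply contat_snd.
    + intros; apply has_pd_snd.
    + intros; apply Ck_const.
Qed.

Lemma Ck_plus k : forall (f g : Dom n -> R), Ck k (box r) f -> Ck k (box r) g ->
  Ck k (box r) (fun q => f q + g q).
Proof.
  induction k as [|k IH]; intros f g Hf Hg.
  - apply cont_on_at. intros q Hq. apply contat_plus; apply (cont_on_contat (box r)); auto.
  - apply (Ck_intro k r _ (fun d q => pd f d q + pd g d q)).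
    + apply cont_on_at. intros q Hq.
      apply contat_plus; apply (cont_on_contat (box r)); auto; eapply Ck_cont; eauto.
    + intros d q Hq. apply has_pd_plus; eapply Ck_has_pd; eauto.
    + intros d. apply IH; apply Ck_pd; auto.
Qed.

Lemma Ck_mult k : forall (f g : Dom n -> R), Ck k (box r) f -> Ck k (box r) g ->
  Ck k (box r) (fun q => f q * g q).
Proof.
  induction k as [|k IH]; intros f g Hf Hg.
  - apply cont_on_at. intros q Hq. apply contat_mult; apply (cont_on_contat (box r)); auto.
  - apply (Ck_intro k r _ (fun d q => pd f d q * g q + f q * pd g d q)).
    + apply cont_on_at. intros q Hq.
      apply contat_mult; apply (cont_on_contat (box r)); auto; eapply Ck_cont; eauto.
    + intros d q Hq. apply has_pd_mult; eapply Ck_has_pd; eauto.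
    + intros d. apply Ck_plus; apply IH; auto using Ck_pd, Ck_weak.
Qed.

Lemma Ck_opp k (f : Dom n -> R) : Ck k (box r) f -> Ck k (box r) (fun q => - f q).
Proof.
  intros H. apply (Ck_ext r k (fun q => (-1) * f q)); [intros; ring|].
  apply Ck_mult; auto using Ck_const.
Qed.

Lemma Ck_minus k (f g : Dom n -> R) :
  Ck k (box r) f -> Ck k (box r) g -> Ck k (box r) (fun q => f q - g q).
Proof. intros. apply Ck_plus; auto using Ck_opp. Qed.

Lemma Ck_inv k : forall (f : Dom n -> R), Ck k (box r) f -> (forall q, box r q -> f q <> 0) ->
  Ck k (box r) (fun q => / f q).
Proof.
  assert (C : forall f : Dom n -> R, cont_on (box r) f -> (forall q, box r q -> f q <> 0) ->
            cont_on (box r) (fun q => / f q)).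
  { intros f Hf Hnz. apply cont_on_at. intros q Hq. apply contat_comp.
    - apply (continuity_pt_inv (fun x => x)); auto using continuity_pt_id.
    - apply (cont_on_contat (box r)); auto. }
  induction k as [|k IH]; intros f Hf Hnz.
  - apply C; auto.
  - apply (Ck_intro k r _ (fun d q => - (/ f q * / f q) * pd f d q)).
    + apply C; auto. eapply Ck_cont; eauto.
    + intros d q Hq. apply has_pd_comp; [eapply Ck_has_pd; eauto | apply dpl_Rinv; auto].
    + intros d. apply Ck_mult; [|apply Ck_pd; auto].
      apply Ck_opp. apply Ck_mult; apply IH; auto using Ck_weak.
Qed.

Lemma Ck_sqrt k : forall (f : Dom n -> R), Ck k (box r) f -> (forall q, box r q -> 0 < f q) ->
  Ck k (box r) (fun q => sqrt (f q)).
Proof.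
  assert (C : forall f : Dom n -> R, cont_on (box r) f -> (forall q, box r q -> 0 < f q) ->
            cont_on (box r) (fun q => sqrt (f q))).
  { intros f Hf Hpos. apply cont_on_at. intros q Hq. apply contat_comp.
    - apply sqrt_continuity_pt. auto.
    - apply (cont_on_contat (box r)); auto. }
  induction k as [|k IH]; intros f Hf Hpos.
  - apply C; auto.
  - apply (Ck_intro k r _ (fun d q => / (2 * sqrt (f q)) * pd f d q)).
    + apply C; auto. eapply Ck_cont; eauto.
    + intros d q Hq. apply has_pd_comp; [eapply Ck_has_pd; eauto|].
      apply derivable_pt_lim_sqrt; auto.
    + intros d. apply Ck_mult; [|apply Ck_pd; auto].
      apply Ck_inv.
      * apply Ck_mult; [apply Ck_const | apply IH; auto using Ck_weak].
      * intros q Hq. pose proof (sqrt_lt_R0 _ (Hpos q Hq)). lra.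
Qed.

Lemma Ck_sumFin k : forall m (F : Fin.t m -> Dom n -> R), (forall i, Ck k (box r) (F i)) ->
  Ck k (box r) (fun q => sumFin m (fun i => F i q)).
Proof.
  induction m as [|m IH]; intros F HF; simpl.
  - apply Ck_const.
  - apply Ck_plus; [auto | apply (IH (fun i => F (Fin.FS i))); auto].
Qed.

End CkTheory.

Definition delta {m} (j i : Fin.t m) : R := if Fin.eq_dec j i then 1 else 0.

Lemma delta_FS {m} (a b : Fin.t m) : delta (Fin.FS a) (Fin.FS b) = delta a b.
Proof.
  unfold delta. destruct (Fin.eq_dec (Fin.FS a) (Fin.FS b)) as [E|E];
  destruct (Fin.eq_dec a b) as [E'|E']; auto.
  - apply Fin.FS_inj in E. contradiction.
  - subst. contradiction.
Qed.

Lemma delta_F1_FS {m} (a : Fin.t m) : delta Fin.F1 (Fin.FS a) = 0.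
Proof. unfold delta. destruct Fin.eq_dec as [E|E]; auto. inversion E. Qed.

Lemma delta_FS_F1 {m} (a : Fin.t m) : delta (Fin.FS a) Fin.F1 = 0.
Proof. unfold delta. destruct Fin.eq_dec as [E|E]; auto. inversion E. Qed.

Lemma delta_refl {m} (a : Fin.t m) : delta a a = 1.
Proof. unfold delta. destruct Fin.eq_dec as [E|E]; auto. contradiction. Qed.

Lemma sumFin_ext m (f g : Fin.t m -> R) : (forall i, f i = g i) -> sumFin m f = sumFin m g.
Proof.
  revert f g. induction m as [|m IH]; intros f g H; simpl; auto.
  rewrite H. f_equal. apply IH. auto.
Qed.

Lemma sumFin_zero m : sumFin m (fun _ => 0) = 0.
Proof. induction m; simpl; auto. rewrite IHm. ring. Qed.

Lemma sumFin_eq0 m (f : Fin.t m -> R) : (forall i, f i = 0) -> sumFin m f = 0.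
Proof. intros H. rewrite (sumFin_ext m f (fun _ => 0)) by auto. apply sumFin_zero. Qed.

Lemma sumFin_scal m c (f : Fin.t m -> R) : sumFin m (fun i => c * f i) = c * sumFin m f.
Proof. revert f. induction m as [|m IH]; intros f; simpl; [|rewrite IH]; ring. Qed.

Lemma sumFin_nonneg m (f : Fin.t m -> R) : (forall i, 0 <= f i) -> 0 <= sumFin m f.
Proof.
  revert f. induction m as [|m IH]; intros f H; simpl; [lra|].
  pose proof (H Fin.F1). pose proof (IH (fun i => f (Fin.FS i)) (fun i => H _)). lra.
Qed.

Lemma sumFin_delta_l m (j : Fin.t m) (f : Fin.t m -> R) :
  sumFin m (fun i => delta j i * f i) = f j.
Proof.
  revert j f. induction m as [|m IH]; intros j f; [inversion j|].
  apply (Fin.caseS' j (fun j => sumFin (S m) (fun i => delta j i * f i) = f j)); simpl.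
  - rewrite delta_refl, sumFin_eq0; [ring|]. intros i. rewrite delta_F1_FS. ring.
  - intros p. rewrite delta_FS_F1.
    rewrite (sumFin_ext m _ (fun i => delta p i * f (Fin.FS i))), IH; [ring|].
    intros i. rewrite delta_FS. ring.
Qed.

Lemma sumFin_delta_r m (j : Fin.t m) (f : Fin.t m -> R) :
  sumFin m (fun i => f i * delta i j) = f j.
Proof.
  rewrite (sumFin_ext m _ (fun i => delta i j * f i)) by (intros; ring).
  revert j f. induction m as [|m IH]; intros j f; [inversion j|].
  apply (Fin.caseS' j (fun j => sumFin (S m) (fun i => delta i j * f i) = f j)); simpl.
  - rewrite delta_refl, sumFin_eq0; [ring|]. intros i. rewrite delta_FS_F1. ring.
  - intros p. rewrite delta_F1_FS.
    rewrite (sumFin_ext m _ (fun i => delta i p * f (Fin.FS i))), IH; [ring|].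
    intros i. rewrite delta_FS. ring.
Qed.

Definition upd {n} (y : Fin.t n -> R) (i : Fin.t n) (h : R) : Fin.t n -> R :=
  fun j => if Fin.eq_dec i j then y j + h else y j.

Lemma upd0 {n} (y : Fin.t n -> R) i : upd y i 0 = y.
Proof. apply functional_extensionality. intros j. unfold upd. destruct Fin.eq_dec; ring. Qed.

Lemma upd_upd {n} (y : Fin.t n -> R) i a b : upd (upd y i a) i b = upd y i (a + b).
Proof. apply functional_extensionality. intros j. unfold upd. destruct Fin.eq_dec; ring. Qed.

Lemma upd_dist {n} (y : Fin.t n -> R) i u v j : Rabs (upd y i u j - upd y i v j) <= Rabs (u - v).
Proof.
  unfold upd. destruct Fin.eq_dec.
  - replace (y j + u - (y j + v)) with (u - v) by ring. lra.
  - rewrite Rminus_diag, Rabs_R0. apply Rabs_pos.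
Qed.

Lemma upd_close {n} (y : Fin.t n -> R) i u j : Rabs (upd y i u j - y j) <= Rabs u.
Proof.
  pose proof (upd_dist y i u 0 j) as H. rewrite upd0, Rminus_0_r in H. exact H.
Qed.

Lemma box_upd_margin {n} r x (y : Fin.t n -> R) i : box r (x, y) ->
  exists e, 0 < e /\ forall t u, Rabs t <= Rabs x -> Rabs u < e -> box r (t, upd y i u).
Proof.
  intros [Hx Hy]. simpl in Hx, Hy. destruct (fin_bound n y r Hy) as [m [Hm Hmi]].
  exists (r - m). split; [lra|]. intros t u Ht Hu. split; simpl; [lra|]. intros j.
  pose proof (upd_close y i u j). specialize (Hmi j).
  pose proof (Rabs_triang (upd y i u j - y j) (y j)).
  replace (upd y i u j - y j + y j) with (upd y i u j) in * by ring. lra.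
Qed.

Lemma dpl_shift F x0 l : derivable_pt_lim (fun h => F (x0 + h)) 0 l -> derivable_pt_lim F x0 l.
Proof.
  intros H eps He. destruct (H eps He) as [d Hd]. exists d. intros h Hh0 Hh.
  specialize (Hd h Hh0 Hh). rewrite !Rplus_0_l, Rplus_0_r in Hd. exact Hd.
Qed.

Lemma is_derive_xslice {n} (g : Dom n -> R) u y l :
  has_pd g None (u, y) l -> is_derive (fun a => g (a, y)) u l.
Proof. intros H. apply is_derive_Reals. apply dpl_shift. exact H. Qed.

Lemma is_derive_yslice {n} (g : Dom n -> R) t y i u l :
  has_pd g (Some i) (t, upd y i u) l -> is_derive (fun z => g (t, upd y i z)) u l.
Proof.
  unfold has_pd. simpl. intros H. apply is_derive_Reals. apply dpl_shift.
  replace (fun h => g (t, upd y i (u + h))) with (fun h => g (t, upd (upd y i u) i h)); [exact H|].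
  apply functional_extensionality. intros h. rewrite upd_upd. reflexivity.
Qed.

Lemma cont_slice {n} r (g : Dom n -> R) t y : cont_on (box r) g -> box r (t, y) ->
  continuous (fun s => g (s, y)) t.
Proof.
  intros Hc Hb. apply continuity_pt_filterlim. intros eps He.
  destruct (Hc _ Hb eps He) as [d [Hd H]]. exists d. split; auto.
  intros s [_ Hs]. apply H; [exact Hs | intros i; simpl; rewrite Rminus_diag, Rabs_R0; auto].
Qed.

Lemma cont2d_plane {n} (h : Dom n -> R) y i t v0 :
  contat h (t, upd y i v0) -> continuity_2d_pt (fun u v => h (u, upd y i v)) t v0.
Proof.
  intros H eps. destruct (H eps (cond_pos eps)) as [d [Hd Hd']].
  exists (mkposreal d Hd). simpl. intros u v Hu Hv. apply Hd'; simpl; [exact Hu|].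
  intros j. pose proof (upd_dist y i v v0 j). lra.
Qed.

Lemma continuity_2d_pt_swap f x y :
  continuity_2d_pt f x y -> continuity_2d_pt (fun u v => f v u) y x.
Proof. intros H eps. destruct (H eps) as [d Hd]. exists d. intros u v Hu Hv. auto. Qed.

(** ** Partial integrals in [x] *)

Definition xint {n} (g : Dom n -> R) (q : Dom n) : R :=
  RInt (fun t => g (t, snd q)) 0 (fst q).

Lemma ex_RInt_slice {n} r (g : Dom n -> R) a b y : cont_on (box r) g ->
  box r (a, y) -> box r (b, y) -> ex_RInt (fun t => g (t, y)) a b.
Proof.
  intros Hc Ha Hb. apply (@ex_RInt_continuous R_CompleteNormedModule). intros z Hz.
  eapply cont_slice; [exact Hc|]. eapply seg_box; [exact Ha | exact Hb | exact Hz].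
Qed.

Lemma abs_RInt_le_len (f : R -> R) a b M : ex_RInt f a b ->
  (forall t, Rmin a b <= t <= Rmax a b -> Rabs (f t) <= M) ->
  Rabs (RInt f a b) <= Rabs (b - a) * M.
Proof.
  intros Hex HM. destruct (Rle_dec a b) as [Hab|Hab].
  - rewrite (Rabs_right (b - a)) by lra. apply abs_RInt_le_const; auto.
    intros t Ht. apply HM. rewrite Rmin_left, Rmax_right; lra.
  - rewrite <- (opp_RInt_swap f b a) by (apply ex_RInt_swap; auto).
    change (Rabs (- RInt f b a) <= Rabs (b - a) * M). rewrite Rabs_Ropp.
    rewrite (Rabs_left (b - a)) by lra. replace (- (b - a)) with (a - b) by ring.
    apply abs_RInt_le_const; [lra | apply ex_RInt_swap; auto|].
    intros t Ht. apply HM. rewrite Rmin_right, Rmax_left; lra.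
Qed.

Lemma xint_ftc {n} r (g : Dom n -> R) q : cont_on (box r) g -> box r q ->
  has_pd (xint g) None q (g q).
Proof.
  intros Hc Hq. destruct q as [x y]. unfold has_pd, xint. simpl.
  apply is_derive_Reals.
  assert (D : is_derive (fun b => RInt (fun t => g (t, y)) 0 b) x (g (x, y))).
  { apply (is_derive_RInt (fun t => g (t, y)) _ 0 x); [|eapply cont_slice; eauto].
    apply locR. destruct (box_margin r (x, y) Hq) as [m [Hm Hm']]. exists m. split; auto.
    intros b Hb. apply (@RInt_correct R_CompleteNormedModule).
    apply (ex_RInt_slice r); [auto | eapply box_x0; eauto|].
    apply Hm'; auto. intros i; simpl; rewrite Rminus_diag, Rabs_R0; auto. }
  assert (Dh : is_derive (fun h : R => x + h) 0 1) by (apply is_derive_Reals; apply dpl_xh).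
  pose proof (is_derive_comp (fun b => RInt (fun t => g (t, y)) 0 b) (fun h : R => x + h) 0 (g (x, y)) 1) as C.
  rewrite Rplus_0_r in C. specialize (C D Dh).
  change (scal 1 (g (x, y))) with (1 * g (x, y)) in C. rewrite Rmult_1_l in C. exact C.
Qed.

(** Continuity in [y] along [[0, x]] is uniform (compactness of the segment). *)
Lemma unif_cont {n} r (g : Dom n -> R) x y : cont_on (box r) g -> box r (x, y) ->
  forall eps, 0 < eps -> exists delta, 0 < delta /\ forall t y',
    Rmin 0 x <= t <= Rmax 0 x -> (forall i, Rabs (y' i - y i) < delta) ->
    Rabs (g (t, y') - g (t, y)) < eps.
Proof.
  intros Hc Hq eps He.
  assert (H : forall t, exists d : posreal, box r (t, y) -> forall q',
     Rabs (fst q' - t) < d -> (forall i, Rabs (snd q' i - y i) < d) ->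
     Rabs (g q' - g (t, y)) < eps / 2).
  { intros t. destruct (classic (box r (t, y))) as [B|B].
    - destruct (Hc _ B (eps/2) ltac:(lra)) as [d [Hd Hd']].
      exists (mkposreal d Hd). intros _. exact Hd'.
    - exists (mkposreal 1 Rlt_0_1). intros C; contradiction. }
  set (delta := fun t => proj1_sig (constructive_indefinite_description _ (H t))).
  assert (Hdelta : forall t, box r (t, y) -> forall q',
     Rabs (fst q' - t) < delta t -> (forall i, Rabs (snd q' i - y i) < delta t) ->
     Rabs (g q' - g (t, y)) < eps / 2).
  { intros t. unfold delta. destruct constructive_indefinite_description as [d Hd]. exact Hd. }
  destruct (compactness_value_1d (Rmin 0 x) (Rmax 0 x) delta) as [d Hd].
  exists d. split; [apply cond_pos|]. intros t y' Ht Hy'.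
  apply NNPP. intros Hneg. apply (Hd t Ht). intros [t0 [Ht0 [A B]]]. apply Hneg.
  assert (Bt0 : box r (t0, y)) by (eapply seg_box; [eapply box_x0; eauto | exact Hq | exact Ht0]).
  assert (E1 : Rabs (g (t, y') - g (t0, y)) < eps / 2).
  { apply Hdelta; auto. intros i. simpl. specialize (Hy' i). lra. }
  assert (E2 : Rabs (g (t, y) - g (t0, y)) < eps / 2).
  { apply Hdelta; auto. intros i. simpl. rewrite Rminus_diag, Rabs_R0. apply cond_pos. }
  replace (g (t, y') - g (t, y)) with ((g (t, y') - g (t0, y)) - (g (t, y) - g (t0, y))) by ring.
  eapply Rle_lt_trans; [apply Rabs_triang | rewrite Rabs_Ropp; lra].
Qed.

Lemma RInt_diff_split (f1 f0 : R -> R) x x' :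
  ex_RInt f1 0 x -> ex_RInt f1 x x' -> ex_RInt f0 0 x ->
  RInt f1 0 x' - RInt f0 0 x = RInt (fun t => f1 t - f0 t) 0 x + RInt f1 x x'.
Proof.
  intros H1 H2 H0. rewrite <- (RInt_Chasles f1 0 x x' H1 H2).
  pose proof (RInt_minus f1 f0 0 x H1 H0) as E. simpl in E.
  change (minus ?a ?b) with (a - b) in E. rewrite E.
  change (plus ?a ?b) with (a + b). ring.
Qed.

Lemma contat_local_bound {n} (g : Dom n -> R) q : contat g q ->
  exists d, 0 < d /\ forall q', Rabs (fst q' - fst q) < d ->
    (forall i, Rabs (snd q' i - snd q i) < d) -> Rabs (g q') <= Rabs (g q) + 1.
Proof.
  intros H. destruct (H 1 Rlt_0_1) as [d [Hd Hd']]. exists d. split; auto.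
  intros q' Hx Hy. pose proof (Hd' q' Hx Hy).
  pose proof (Rabs_triang (g q' - g q) (g q)).
  replace (g q' - g q + g q) with (g q') in * by ring. lra.
Qed.

Lemma xint_cont {n} r (g : Dom n -> R) q : cont_on (box r) g -> box r q -> contat (xint g) q.
Proof.
  intros Hc Hq. destruct q as [x y]. intros eps He.
  destruct (box_margin r (x,y) Hq) as [m0 [Hm0 Hm0']].
  destruct (contat_local_bound g (x, y) (Hc _ Hq)) as [d1 [Hd1 Hbd]].
  set (M := Rabs (g (x,y)) + 1).
  assert (HM : 0 < M) by (pose proof (Rabs_pos (g (x,y))); unfold M; lra).
  assert (Hxp : 0 <= Rabs x) by apply Rabs_pos.
  set (e2 := eps / (2 * (Rabs x + 1))).
  assert (He2 : 0 < e2) by (apply Rdiv_lt_0_compat; lra).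
  destruct (unif_cont r g x y Hc Hq e2 He2) as [d2 [Hd2 Hd2']].
  assert (HeM : 0 < eps / (2 * M)) by (apply Rdiv_lt_0_compat; lra).
  exists (Rmin (Rmin m0 d1) (Rmin d2 (eps / (2 * M)))). split; [repeat apply Rmin_pos; auto|].
  intros [x' y'] Hx Hy. simpl in Hx, Hy.
  apply Rmin_lt_inv in Hx as [[Hx0 Hx1]%Rmin_lt_inv [Hx2 Hx3]%Rmin_lt_inv].
  assert (Hy' : forall i, Rabs (y' i - y i) < m0 /\ Rabs (y' i - y i) < d1 /\
                          Rabs (y' i - y i) < d2).
  { intros i. specialize (Hy i).
    apply Rmin_lt_inv in Hy as [[? ?]%Rmin_lt_inv [? _]%Rmin_lt_inv]. auto. }
  assert (B' : box r (x', y')) by (apply Hm0'; simpl; [lra | apply Hy']).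
  assert (Bxy' : box r (x, y')).
  { apply Hm0'; simpl; [rewrite Rminus_diag, Rabs_R0; lra | apply Hy']. }
  assert (X1 : ex_RInt (fun t => g (t, y')) 0 x) by (apply (ex_RInt_slice r); eauto using box_x0).
  assert (X0 : ex_RInt (fun t => g (t, y)) 0 x) by (apply (ex_RInt_slice r); eauto using box_x0).
  unfold xint; simpl.
  rewrite RInt_diff_split; [| exact X1 | apply (ex_RInt_slice r); auto | exact X0].
  assert (I1 : Rabs (RInt (fun t => g (t,y') - g (t,y)) 0 x) <= Rabs (x - 0) * e2).
  { apply abs_RInt_le_len; [exact (ex_RInt_minus _ _ 0 x X1 X0)|].
    intros t Ht. left. apply Hd2'; auto. apply Hy'. }
  assert (I2 : Rabs (RInt (fun t => g (t, y')) x x') <= Rabs (x' - x) * M).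
  { apply abs_RInt_le_len; [apply (ex_RInt_slice r); auto|]. intros t Ht.
    apply Hbd; simpl; [|apply Hy'].
    enough (Rabs (t - x) <= Rabs (x' - x)) by lra.
    apply segment_abs.
    destruct (Rle_dec x x');
      [rewrite Rmin_left, Rmax_right in * by lra | rewrite Rmin_right, Rmax_left in * by lra]; lra. }
  rewrite Rminus_0_r in I1.
  assert (I3 : Rabs x * e2 < eps / 2).
  { replace (Rabs x * e2) with (eps / 2 - e2) by (unfold e2; field; lra). lra. }
  assert (I4 : Rabs (x' - x) * M < eps / 2).
  { replace (eps / 2) with (eps / (2 * M) * M) by (field; lra). apply Rmult_lt_compat_r; lra. }
  eapply Rle_lt_trans; [apply Rabs_triang | lra].
Qed.

Lemma xint_param {n} r (g : Dom n -> R) i q : Ck 1 (box r) g -> box r q ->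
  has_pd (xint g) (Some i) q (xint (pd g (Some i)) q).
Proof.
  intros Hg Hq. destruct q as [x y].
  assert (Hcd : cont_on (box r) (pd g (Some i))) by (apply (Ck_cont 0); apply Ck_pd; exact Hg).
  destruct (box_upd_margin r x y i Hq) as [e [He Bseg]].
  assert (Dg : forall t u, box r (t, upd y i u) ->
    is_derive (fun z => g (t, upd y i z)) u (pd g (Some i) (t, upd y i u))).
  { intros t u B. apply is_derive_yslice. apply (Ck_has_pd 0 r); auto. }
  assert (Bt : forall t, Rmin 0 x <= t <= Rmax 0 x -> box r (t, y)).
  { intros t Ht. rewrite <- (upd0 y i). apply Bseg; [apply segment_abs | rewrite Rabs_R0]; auto. }
  unfold has_pd, xint. simpl. apply is_derive_Reals.
  change (is_derive (fun h => RInt (fun t => g (t, upd y i h)) 0 x) 0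
            (RInt (fun t => pd g (Some i) (t, y)) 0 x)).
  replace (RInt (fun t => pd g (Some i) (t, y)) 0 x)
    with (RInt (fun t => Derive (fun u => g (t, upd y i u)) 0) 0 x).
  2: { apply RInt_ext. intros t Ht.
       replace (pd g (Some i) (t, y)) with (pd g (Some i) (t, upd y i 0)) by (rewrite upd0; auto).
       apply is_derive_unique, Dg. rewrite upd0. apply Bt. lra. }
  apply (is_derive_RInt_param (fun u t => g (t, upd y i u)) 0 x 0).
  - apply locR. exists e. split; auto. intros u Hu t Ht. rewrite Rminus_0_r in Hu.
    eexists. apply Dg. apply Bseg; auto. apply segment_abs; auto.
  - intros t Ht. apply (continuity_2d_pt_swap (fun a b => Derive (fun z => g (a, upd y i z)) b)).
    apply (continuity_2d_pt_ext_loc (fun a b => pd g (Some i) (a, upd y i b))).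
    + destruct (box_margin r (t, y) (Bt t Ht)) as [m [Hm Hm']].
      exists (mkposreal m Hm). simpl. intros a b Ha Hb. rewrite Rminus_0_r in Hb.
      symmetry. apply is_derive_unique. apply Dg. apply Hm'; [exact Ha|].
      intros j. pose proof (upd_close y i b j). simpl. lra.
    + apply cont2d_plane. rewrite upd0. apply (cont_on_contat (box r)); auto.
  - apply locR. exists e. split; auto. intros u Hu. rewrite Rminus_0_r in Hu.
    apply (ex_RInt_slice r); [eapply Ck_cont; eauto | |]; apply Bseg; auto.
    + rewrite Rabs_R0. apply Rabs_pos.
    + apply Rle_refl.
Qed.

Lemma Ck_xint {n} r k : forall (g : Dom n -> R), Ck k (box r) g -> Ck k (box r) (xint g).
Proof.
  induction k as [|k IH]; intros g Hg.
  - apply cont_on_at. intros q Hq. apply (xint_cont r); auto.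
  - apply (Ck_intro k r _ (fun d => match d with None => g | Some i => xint (pd g (Some i)) end)).
    + apply cont_on_at. intros q Hq. apply (xint_cont r); auto. eapply Ck_cont; eauto.
    + intros [i|] q Hq.
      * apply (xint_param r); auto. apply (Ck_weak_le (S k)); auto. lia.
      * apply (xint_ftc r); auto. eapply Ck_cont; eauto.
    + intros [i|]; [apply IH; apply Ck_pd | apply Ck_weak]; auto.
Qed.

(** The Riemann integral [Rint] of [Defs] agrees with [RInt] for continuous
    integrands, so the same results hold for the partial integrals [Rint]. *)
Lemma Rint_0 f a : Rint f a a = 0.
Proof. unfold Rint. destruct excluded_middle_informative; auto. apply RiemannInt_P9. Qed.

Lemma Rint_RInt f a b : ex_RInt f a b -> Rint f a b = RInt f a b.
Proof.
  intros H. unfold Rint. destruct excluded_middle_informative as [E|E].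
  - destruct constructive_indefinite_description as [pr Hpr]. simpl. symmetry. apply RInt_Reals.
  - exfalso. apply E. exists (ex_RInt_Reals_0 _ _ _ H). auto.
Qed.

Definition xRint {n} (g : Dom n -> R) (q : Dom n) : R :=
  Rint (fun t => g (t, snd q)) 0 (fst q).

Lemma xRint_xint {n} r (g : Dom n -> R) q : cont_on (box r) g -> box r q -> xRint g q = xint g q.
Proof.
  intros Hc Hq. destruct q as [x y]. apply Rint_RInt.
  apply (ex_RInt_slice r); eauto using box_x0.
Qed.

Lemma Ck_xRint {n} r k (g : Dom n -> R) : Ck k (box r) g -> Ck k (box r) (xRint g).
Proof.
  intros H. apply (Ck_ext r k (xint g)); [|apply Ck_xint; auto].
  intros q Hq. symmetry. apply (xRint_xint r); auto. eapply Ck_cont; eauto.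
Qed.

Lemma xRint_ftc {n} r (g : Dom n -> R) q : cont_on (box r) g -> box r q ->
  has_pd (xRint g) None q (g q).
Proof.
  intros Hc Hq. apply (has_pd_ext r (xint g)); [auto | | apply (xint_ftc r); auto].
  intros q' Hq'. symmetry. apply (xRint_xint r); auto.
Qed.

(** Partial integrals vanish on the hyperplane [x = 0], hence so do their
    [y]-derivatives there. *)
Lemma xRint_pd_y0 {n} (g : Dom n -> R) i : pd (xRint g) (Some i) origin = 0.
Proof.
  apply has_pd_pd. unfold has_pd. apply (derivable_pt_lim_ext (fun _ => 0)).
  - intros h. unfold xRint. simpl. symmetry. apply Rint_0.
  - apply derivable_pt_lim_const.
Qed.

(** ** Symmetry of mixed partials at the origin *)

Definition plane {n} (i : Fin.t n) (u v : R) : Dom n := (u, upd (fun _ => 0) i v).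

Lemma plane_origin {n} (i : Fin.t n) : plane i 0 0 = origin.
Proof. unfold plane, origin. rewrite upd0. reflexivity. Qed.

Lemma box_plane {n} r (i : Fin.t n) u v : Rabs u < r -> Rabs v < r -> box r (plane i u v).
Proof.
  intros Hu Hv. split; simpl; auto. intros j.
  pose proof (upd_close (fun _ : Fin.t n => 0) i v j) as H. rewrite Rminus_0_r in H. lra.
Qed.

Lemma is_derive_plane_x {n} r (g : Dom n -> R) i u v : Ck 1 (box r) g ->
  Rabs u < r -> Rabs v < r -> is_derive (fun a => g (plane i a v)) u (pd g None (plane i u v)).
Proof. intros Hg Hu Hv. apply is_derive_xslice, (Ck_has_pd 0 r); auto using box_plane. Qed.

Lemma is_derive_plane_y {n} r (g : Dom n -> R) i u v : Ck 1 (box r) g ->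
  Rabs u < r -> Rabs v < r -> is_derive (fun b => g (plane i u b)) v (pd g (Some i) (plane i u v)).
Proof. intros Hg Hu Hv. apply is_derive_yslice, (Ck_has_pd 0 r); auto using box_plane. Qed.

Lemma near_lt (u r : R) : Rabs u < r -> locally u (fun z => Rabs z < r).
Proof.
  intros H. apply locR. exists (r - Rabs u). split; [lra|]. intros z Hz.
  pose proof (Rabs_triang (z - u) u). replace (z - u + u) with z in * by ring. lra.
Qed.

(** Schwarz: [d_x d_{y_i} f (0) = d_{y_i} d_x f (0)] for [f] of class [C^3]
    (reduced to Coquelicot's two-variable [Schwarz] on [plane i]). *)
Lemma schwarz_origin {n} r (f : Dom n -> R) i : 0 < r -> Ck 3 (box r) f ->
  pd (pd f (Some i)) None origin = pd (pd f None) (Some i) origin.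
Proof.
  intros Hr Hf. set (F u v := f (plane i u v)).
  assert (Hf1 : Ck 1 (box r) f) by (apply (Ck_weak_le 3); auto).
  assert (Hfd : forall d, Ck 1 (box r) (pd f d)) by (intros; apply Ck_weak, Ck_pd; exact Hf).
  assert (D21 : forall u v, Rabs u < r -> Rabs v < r ->
     is_derive (fun z => Derive (fun t => F z t) v) u (pd (pd f (Some i)) None (plane i u v))).
  { intros u v Hu Hv.
    eapply is_derive_ext_loc; [|apply (is_derive_plane_x r (pd f (Some i)) i u v); auto].
    eapply filter_imp; [|apply (near_lt u r Hu)]. intros z Hz. symmetry.
    apply is_derive_unique, (is_derive_plane_y r f i z v); auto. }
  assert (D12 : forall u v, Rabs u < r -> Rabs v < r ->
     is_derive (fun z => Derive (fun t => F t z) u) v (pd (pd f None) (Some i) (plane i u v))).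
  { intros u v Hu Hv.
    eapply is_derive_ext_loc; [|apply (is_derive_plane_y r (pd f None) i u v); auto].
    eapply filter_imp; [|apply (near_lt v r Hv)]. intros z Hz. symmetry.
    apply is_derive_unique, (is_derive_plane_x r f i u z); auto. }
  assert (C : forall G d1 d2, (forall u v, Rabs u < r -> Rabs v < r ->
            G u v = pd (pd f d1) d2 (plane i u v)) -> continuity_2d_pt G 0 0).
  { intros G d1 d2 HG. apply (continuity_2d_pt_ext_loc (fun u v => pd (pd f d1) d2 (plane i u v))).
    - exists (mkposreal r Hr). simpl. intros u v Hu Hv. rewrite !Rminus_0_r in *. symmetry. auto.
    - apply cont2d_plane. rewrite upd0. apply (cont_on_contat (box r)); [|apply origin_box; auto].
      apply (Ck_cont 1). apply Ck_pd, Ck_pd. exact Hf. }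
  assert (H0 : Rabs 0 < r) by (rewrite Rabs_R0; auto).
  rewrite <- (plane_origin i).
  rewrite <- (is_derive_unique _ _ _ (D21 0 0 H0 H0)), <- (is_derive_unique _ _ _ (D12 0 0 H0 H0)).
  apply Schwarz.
  - exists (mkposreal r Hr). simpl. intros u v Hu Hv. rewrite !Rminus_0_r in *.
    split; [|split; [|split]]; eexists;
      [apply (is_derive_plane_x r f i u v) | apply (is_derive_plane_y r f i u v)
       | apply D21 | apply D12]; auto.
  - apply (C _ (Some i) None). intros; apply is_derive_unique, D21; auto.
  - apply (C _ None (Some i)). intros; apply is_derive_unique, D12; auto.
Qed.

Definition Sm {n} r (f : Dom n -> R) : Prop := forall k, Ck k (box r) f.

Definition for_small_radii (P : R -> Prop) : Prop :=
  exists r0, 0 < r0 /\ forall r, 0 < r -> r <= r0 -> P r.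

Lemma small_and (P Q : R -> Prop) :
  for_small_radii P -> for_small_radii Q -> for_small_radii (fun r => P r /\ Q r).
Proof.
  intros [a [Ha HP]] [b [Hb HQ]]. exists (Rmin a b). split; [apply Rmin_pos; auto|].
  intros r Hr Hle. pose proof (Rmin_l a b). pose proof (Rmin_r a b). split; [apply HP | apply HQ]; lra.
Qed.

Lemma small_witness (P : R -> Prop) : for_small_radii P -> exists r, 0 < r /\ P r.
Proof. intros [a [Ha HP]]. exists a. split; auto. apply HP; lra. Qed.

Lemma small_box {n} (P : Dom n -> Prop) : (exists r, 0 < r /\ forall q, box r q -> P q) ->
  for_small_radii (fun r => forall q, box r q -> P q).
Proof.
  intros [a [Ha HP]]. exists a. split; auto. intros r Hr Hle q Hq. apply HP.
  apply (box_mono a r); auto.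
Qed.

Lemma small_smooth {n} (f : Dom n -> R) : smooth_germ f -> for_small_radii (fun r => Sm r f).
Proof.
  intros [a [Ha H]]. exists a. split; auto. intros r Hr Hle k.
  apply (Ck_mono k (box a)); auto. intros q. apply (box_mono a r); auto.
Qed.

Lemma small_nonzero {n} (f : Dom n -> R) : smooth_germ f -> f origin <> 0 ->
  for_small_radii (fun r => forall q, box r q -> f q <> 0).
Proof.
  intros [a [Ha H]] H0. apply small_box.
  assert (Hf : Rabs (f origin) / 2 > 0) by (pose proof (Rabs_pos_lt _ H0); lra).
  destruct (Ck_cont 0 _ _ (H 0%nat) origin (origin_box a Ha) _ Hf) as [d [Hd Hd']].
  exists d. split; auto. intros q [Hx Hy] E. simpl in Hx, Hy.
  assert (Hq : Rabs (f q - f origin) < Rabs (f origin) / 2).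
  { apply Hd'; simpl; [|intros i]; rewrite Rminus_0_r; auto. }
  rewrite E, Rminus_0_l, Rabs_Ropp in Hq. lra.
Qed.

(** ** Part (1): the integration of a pedal unfolding is a normalized Legendrian *)

Section Integration.
Context {n : nat} (nf pf : Dom n -> R) (r : R) (Hr : 0 < r) (Snf : Sm r nf) (Spf : Sm r pf)
  (Hn0 : nf origin = 0) (Hp0 : pf origin = 0) (Hnd : pd nf None origin <> 0).

Let Phi := integration nf pf.

Lemma Sm_int1 : Sm r (c1 Phi).
Proof. intros k. apply (Ck_xRint r k (fun q => nf q * pf q)), Ck_mult; auto. Qed.

Lemma Sm_int2 : Sm r (c2 Phi).
Proof. intros k. apply (Ck_xRint r k pf); auto. Qed.

Lemma int1_x q : box r q -> pd (c1 Phi) None q = nf q * pf q.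
Proof.
  intros Hq. apply has_pd_pd, (xRint_ftc r (fun q => nf q * pf q)); auto.
  apply (Ck_cont 0), Ck_mult; auto.
Qed.

Lemma int2_x q : box r q -> pd (c2 Phi) None q = pf q.
Proof. intros Hq. apply has_pd_pd, (xRint_ftc r pf); auto. apply (Ck_cont 0); auto. Qed.

Lemma inty_pd d i q : pd (cy Phi i) d q = dsnd d i.
Proof. apply has_pd_pd, has_pd_snd. Qed.

Let A i := pd (c1 Phi) (Some i).
Let B i := pd (c2 Phi) (Some i).
Let w i q := nf q * B i q - A i q.
Let V q := 1 + nf q * nf q + sumFin n (fun i => w i q * w i q).
Let s q := sqrt (V q).
Let nu (q : Dom n) : Tgt n := (/ s q, - nf q * / s q, fun i => w i q * / s q).

Lemma V_ge1 q : 1 <= V q.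
Proof.
  unfold V. pose proof (sumFin_nonneg n (fun i => w i q * w i q) (fun i => Rle_0_sqr (w i q))).
  pose proof (Rle_0_sqr (nf q)). unfold Rsqr in *. lra.
Qed.

Lemma s_pos q : 0 < s q.
Proof. unfold s. apply sqrt_lt_R0. pose proof (V_ge1 q). lra. Qed.

Lemma s_sq q : s q * s q = V q.
Proof. unfold s. apply sqrt_sqrt. pose proof (V_ge1 q). lra. Qed.

Lemma Sm_w i : Sm r (w i).
Proof. intros k. apply Ck_minus; [apply Ck_mult; [apply Snf | apply Ck_pd, Sm_int2] | apply Ck_pd, Sm_int1]. Qed.

Lemma Sm_invs : Sm r (fun q => / s q).
Proof.
  intros k. apply Ck_inv; [|intros q _; pose proof (s_pos q); lra].
  apply Ck_sqrt; [|intros q _; pose proof (V_ge1 q); lra].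
  apply Ck_plus; [apply Ck_plus; [apply Ck_const | apply Ck_mult; apply Snf]|].
  apply (Ck_sumFin r k n (fun i q => w i q * w i q)). intros i. apply Ck_mult; apply Sm_w.
Qed.

Lemma nu_smooth : smooth_map_germ nu.
Proof.
  split; [|split; [|intros i]]; exists r; split; auto; intros k; unfold c1, c2, cy, nu; simpl.
  - apply Sm_invs.
  - apply Ck_mult; [apply Ck_opp, Snf | apply Sm_invs].
  - apply Ck_mult; [apply Sm_w | apply Sm_invs].
Qed.

Lemma nu_unit q : dotT (nu q) (nu q) = 1.
Proof.
  unfold dotT, nu. simpl.
  rewrite (sumFin_ext n _ (fun i => (/ s q * / s q) * (w i q * w i q))) by (intros; ring).
  rewrite sumFin_scal. pose proof (s_sq q) as E. pose proof (s_pos q). unfold V in E.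
  apply (Rmult_eq_reg_r (s q * s q)); [|nra]. field_simplify; [|lra]. lra.
Qed.

Lemma nu_ortho q d : box r q -> dotT (pdT Phi d q) (nu q) = 0.
Proof.
  intros Hq. unfold dotT, pdT, nu. simpl. pose proof (s_pos q). destruct d as [j|].
  - rewrite (sumFin_ext n _ (fun i => delta j i * (w i q * / s q)))
      by (intros i; rewrite inty_pd; reflexivity).
    rewrite sumFin_delta_l. unfold w. fold (A j q) (B j q). field. lra.
  - rewrite int1_x, int2_x, sumFin_eq0 by (auto; intros i; rewrite inty_pd; simpl; ring).
    field. lra.
Qed.

Lemma w_origin i : w i origin = 0.
Proof. unfold w, A. rewrite (xRint_pd_y0 (fun q => nf q * pf q)), Hn0. ring. Qed.

Lemma nu_origin : nu origin = e1.
Proof.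
  assert (V0 : V origin = 1).
  { unfold V. rewrite sumFin_eq0, Hn0; [ring|]. intros i. rewrite w_origin. ring. }
  unfold nu, e1, s. rewrite V0, sqrt_1, Rinv_1, Hn0. f_equal; [f_equal; ring|].
  apply functional_extensionality. intros i. rewrite w_origin. ring.
Qed.

(** [(Phi, nu)] is an immersion at [0]: the [y]-components of [Phi] see the
    [y]-directions, and [d_x nu_2 (0) = - d_x n (0) <> 0] sees the [x]-direction. *)
Lemma nu_immersive : immersive_pair_at0 Phi nu.
Proof.
  intros c _ _ H3 _ H5 _.
  assert (Cy : forall i, c (Some i) = 0).
  { intros i. specialize (H3 i). unfold dR0, lin in H3. rewrite inty_pd in H3. simpl in H3.
    rewrite (sumFin_ext n _ (fun j => c (Some j) * delta j i)), sumFin_delta_r in H3;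
      [lra | intros j; rewrite inty_pd; reflexivity]. }
  assert (D : has_pd (c2 nu) None origin (- pd nf None origin * / s origin)).
  { replace (- pd nf None origin * / s origin)
      with (- pd nf None origin * / s origin + - nf origin * pd (fun q => / s q) None origin)
      by (rewrite Hn0; ring).
    unfold c2, nu. simpl. apply (has_pd_mult (fun q => - nf q) (fun q => / s q)).
    - apply has_pd_opp. apply (Ck_has_pd 0 r); [apply Snf | apply origin_box; auto].
    - apply (Ck_has_pd 0 r); [apply Sm_invs | apply origin_box; auto]. }
  unfold dR0, lin in H5. rewrite (has_pd_pd _ _ _ _ D), sumFin_eq0 in H5
    by (intros j; rewrite Cy; ring).
  pose proof (Rinv_0_lt_compat _ (s_pos origin)).
  intros [i|]; auto.
  assert (K : c None * (pd nf None origin * / s origin) = 0) by lra.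
  apply Rmult_integral in K as [K|K]; auto. exfalso.
  apply Rmult_integral in K as [K|K]; [exact (Hnd K) | lra].
Qed.

Lemma integration_normalized_on_box : normalized_legendrian Phi.
Proof.
  assert (LF : legendrian_field Phi nu).
  { split; [apply nu_smooth | split; [|apply nu_immersive]].
    exists r. split; auto. intros q Hq. split; [apply nu_unit | intros d; apply nu_ortho; auto]. }
  split; [split; [|split]|split; [|split]].
  - split; [|split; [|intros i]]; exists r; split; auto;
      [apply Sm_int1 | apply Sm_int2 | intros k; apply Ck_snd].
  - unfold Phi, integration, tgt0. simpl. rewrite !Rint_0. reflexivity.
  - exists nu. exact LF.
  - exists r. split; auto.
  - rewrite int2_x; [exact Hp0 | apply origin_box; auto].
  - exists nu. split; [exact LF | left; apply nu_origin].
Qed.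

End Integration.

Lemma integration_normalized {n} (nf pf : Dom n -> R) :
  pedal_data nf pf -> normalized_legendrian (integration nf pf).
Proof.
  intros [Snf [Spf [Hn0 [Hp0 Hnd]]]].
  destruct (small_witness _ (small_and _ _ (small_smooth nf Snf) (small_smooth pf Spf)))
    as [r [Hr [Sn Sp]]].
  exact (integration_normalized_on_box nf pf r Hr Sn Sp Hn0 Hp0 Hnd).
Qed.

(** ** Part (2): the differential of a normalized Legendrian is of pedal unfolding type *)

Section Differential.
Context {n : nat} (Phi nu : Dom n -> Tgt n) (r : R) (Hr : 0 < r)
  (S1 : Sm r (c1 Phi)) (S2 : Sm r (c2 Phi)) (N1 : Sm r (c1 nu)) (N2 : Sm r (c2 nu))
  (Hy : forall q, box r q -> snd (Phi q) = snd q)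
  (Hii : pd (c2 Phi) None origin = 0)
  (Hnu : forall q, box r q -> dotT (nu q) (nu q) = 1 /\ forall d, dotT (pdT Phi d q) (nu q) = 0)
  (Himm : immersive_pair_at0 Phi nu)
  (Hnu1 : forall q, box r q -> c1 nu q <> 0)
  (Hnu0 : nu origin = e1 \/ nu origin = me1).

Lemma box_o : box r (@origin n).
Proof. apply origin_box; auto. Qed.

Lemma has_pd_o (f : Dom n -> R) d : Sm r f -> has_pd f d origin (pd f d origin).
Proof. intros H. apply (Ck_has_pd 0 r); [apply H | apply box_o]. Qed.

Lemma Phiy_pd q i d : box r q -> pd (cy Phi i) d q = dsnd d i.
Proof.
  intros Hq. apply has_pd_pd, (has_pd_ext r (fun q => snd q i)); auto using has_pd_snd.
  intros q' Hq'. unfold cy. rewrite Hy; auto.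
Qed.

Lemma nu1_o : c1 nu origin <> 0.
Proof. apply Hnu1, box_o. Qed.

Lemma nu2_o : c2 nu origin = 0.
Proof. unfold c2. destruct Hnu0 as [E|E]; rewrite E; reflexivity. Qed.

Lemma nuy_o i : cy nu i origin = 0.
Proof. unfold cy. destruct Hnu0 as [E|E]; rewrite E; reflexivity. Qed.

Lemma ortho_x q : box r q ->
  pd (c1 Phi) None q * c1 nu q + pd (c2 Phi) None q * c2 nu q = 0.
Proof.
  intros Hq. pose proof (proj2 (Hnu q Hq) None) as H. unfold dotT, pdT in H. simpl in H.
  rewrite sumFin_eq0 in H by (intros i; rewrite Phiy_pd by auto; simpl; ring).
  unfold c1, c2 in *. lra.
Qed.

Lemma ortho_y q i : box r q ->
  cy nu i q = - (pd (c1 Phi) (Some i) q * c1 nu q + pd (c2 Phi) (Some i) q * c2 nu q).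
Proof.
  intros Hq. pose proof (proj2 (Hnu q Hq) (Some i)) as H. unfold dotT, pdT in H. simpl in H.
  rewrite (sumFin_ext n _ (fun j => delta i j * snd (nu q) j)), sumFin_delta_l in H
    by (intros j; rewrite Phiy_pd by auto; reflexivity).
  unfold c1, c2, cy in *. lra.
Qed.

Lemma Phi1_x_o : pd (c1 Phi) None origin = 0.
Proof.
  pose proof (ortho_x origin box_o) as H. rewrite nu2_o in H.
  apply (Rmult_eq_reg_r (c1 nu origin)); [lra | apply nu1_o].
Qed.

Let nf := fun q => - c2 nu q * / c1 nu q.
Let pf := pd (c2 Phi) None.

Lemma Sm_nf : Sm r nf.
Proof. intros k. apply Ck_mult; [apply Ck_opp, N2 | apply Ck_inv; [apply N1 | auto]]. Qed.

Lemma Sm_pf : Sm r pf.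
Proof. intros k. apply Ck_pd, S2. Qed.

Lemma Phi1_x q : box r q -> pd (c1 Phi) None q = nf q * pf q.
Proof.
  intros Hq. pose proof (ortho_x q Hq). pose proof (Hnu1 q Hq). unfold nf, pf.
  apply (Rmult_eq_reg_r (c1 nu q)); auto. field_simplify; auto. lra.
Qed.

Lemma nf_x_o : pd nf None origin * c1 nu origin = - pd (c2 nu) None origin.
Proof.
  assert (D : has_pd nf None origin
     (- pd (c2 nu) None origin * / c1 nu origin + - c2 nu origin * pd (fun q => / c1 nu q) None origin)).
  { apply (has_pd_mult (fun q => - c2 nu q) (fun q => / c1 nu q)).
    - apply has_pd_opp, has_pd_o, N2.
    - apply has_pd_o. intros k. apply Ck_inv; [apply N1 | auto]. }
  rewrite (has_pd_pd _ _ _ _ D), nu2_o. field. apply nu1_o.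
Qed.

Let A i := pd (c1 Phi) (Some i).
Let B i := pd (c2 Phi) (Some i).

Lemma nuy_has_pd_x i : has_pd (cy nu i) None origin
  (- ((pd (A i) None origin * c1 nu origin + A i origin * pd (c1 nu) None origin) +
      (pd (B i) None origin * c2 nu origin + B i origin * pd (c2 nu) None origin))).
Proof.
  apply (has_pd_ext r (fun q => - (A i q * c1 nu q + B i q * c2 nu q))); [apply box_o| |].
  - intros q Hq. symmetry. apply ortho_y; auto.
  - assert (SA : Sm r (A i)) by (intros k; apply Ck_pd, S1).
    assert (SB : Sm r (B i)) by (intros k; apply Ck_pd, S2).
    apply has_pd_opp, has_pd_plus; apply has_pd_mult; apply has_pd_o; auto.
Qed.

(** Unit length: [d_x |nu|^2 = 2 nu_1 d_x nu_1 = 0] at the origin. *)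
Lemma nu1_x_o : pd (c1 nu) None origin = 0.
Proof.
  set (L i := - ((pd (A i) None origin * c1 nu origin + A i origin * pd (c1 nu) None origin) +
                 (pd (B i) None origin * c2 nu origin + B i origin * pd (c2 nu) None origin))).
  assert (U0 : has_pd (fun q => dotT (nu q) (nu q)) None origin 0).
  { apply (has_pd_ext r (fun _ => 1)); [apply box_o | | apply has_pd_const].
    intros q Hq. symmetry. apply Hnu; auto. }
  assert (U1 : has_pd (fun q => dotT (nu q) (nu q)) None origin
     ((pd (c1 nu) None origin * c1 nu origin + c1 nu origin * pd (c1 nu) None origin)
      + (pd (c2 nu) None origin * c2 nu origin + c2 nu origin * pd (c2 nu) None origin)
      + sumFin n (fun i => L i * cy nu i origin + cy nu i origin * L i))).
  { unfold dotT. apply has_pd_plus; [apply has_pd_plus|];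
      [apply has_pd_mult; apply has_pd_o; auto .. |].
    apply (has_pd_sumFin n (fun i q => cy nu i q * cy nu i q)).
    intros i. apply has_pd_mult; apply nuy_has_pd_x. }
  apply has_pd_pd in U0. apply has_pd_pd in U1. rewrite U0, nu2_o, sumFin_eq0 in U1
    by (intros i; rewrite nuy_o; ring).
  pose proof nu1_o. apply (Rmult_eq_reg_l (2 * c1 nu origin)); lra.
Qed.

(** Differentiating [ortho_x] in [y_i] and using Schwarz:
    [d_x d_{y_i} Phi_1 (0) = d_{y_i} d_x Phi_1 (0) = 0]. *)
Lemma Phi1_xy_o i : pd (A i) None origin = 0.
Proof.
  unfold A. rewrite (schwarz_origin r (c1 Phi) i Hr (S1 3%nat)).
  set (P := pd (c1 Phi) None). set (Q := pd (c2 Phi) None).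
  assert (SP : Sm r P) by (intros k; apply Ck_pd, S1).
  assert (SQ : Sm r Q) by (intros k; apply Ck_pd, S2).
  assert (V0 : has_pd (fun q => P q * c1 nu q + Q q * c2 nu q) (Some i) origin 0).
  { apply (has_pd_ext r (fun _ => 0)); [apply box_o | | apply has_pd_const].
    intros q Hq. symmetry. apply ortho_x; auto. }
  assert (V1 : has_pd (fun q => P q * c1 nu q + Q q * c2 nu q) (Some i) origin
     ((pd P (Some i) origin * c1 nu origin + P origin * pd (c1 nu) (Some i) origin) +
      (pd Q (Some i) origin * c2 nu origin + Q origin * pd (c2 nu) (Some i) origin))).
  { apply has_pd_plus; apply has_pd_mult; apply has_pd_o; auto. }
  apply has_pd_pd in V0. apply has_pd_pd in V1. rewrite V0 in V1.
  unfold P, Q in *. rewrite Phi1_x_o, Hii, nu2_o in V1.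
  pose proof nu1_o. apply (Rmult_eq_reg_r (c1 nu origin)); [lra | auto].
Qed.

Lemma nuy_x_o i : pd (cy nu i) None origin = - (B i origin * pd (c2 nu) None origin).
Proof.
  rewrite (has_pd_pd _ _ _ _ (nuy_has_pd_x i)), Phi1_xy_o, nu1_x_o, nu2_o. ring.
Qed.

(** If [d_x n (0)] vanished, then [d_x] would lie in the kernel of
    [d(Phi, nu)(0)]. *)
Lemma nf_x_o_neq0 : pd nf None origin <> 0.
Proof.
  intros Hz.
  assert (Ha : pd (c2 nu) None origin = 0) by (pose proof nf_x_o as E; rewrite Hz in E; lra).
  set (ex := fun d : option (Fin.t n) => match d with None => 1 | Some _ => 0 end).
  assert (Hex : forall f : Dom n -> R, dR0 f ex = pd f None origin).
  { intros f. unfold dR0, lin. rewrite sumFin_eq0 by (intros; simpl; ring). simpl. ring. }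
  assert (E : ex None = 0).
  { apply Himm; intros; rewrite Hex.
    - exact Phi1_x_o.
    - exact Hii.
    - apply Phiy_pd, box_o.
    - exact nu1_x_o.
    - exact Ha.
    - rewrite nuy_x_o, Ha. ring. }
  simpl in E. lra.
Qed.

Lemma differential_pedal_on_box : pedal_unfolding_type (differential Phi).
Proof.
  exists nf, pf. split.
  - split; [|split; [|split; [|split]]].
    + exists r. split; [auto | apply Sm_nf].
    + exists r. split; [auto | apply Sm_pf].
    + unfold nf. rewrite nu2_o. ring.
    + exact Hii.
    + exact nf_x_o_neq0.
  - exists r. split; auto. intros q Hq. unfold differential, pedal_map.
    rewrite Phi1_x by auto. reflexivity.
Qed.

End Differential.

Lemma differential_pedal {n} (Phi : Dom n -> Tgt n) :
  normalized_legendrian Phi -> pedal_unfolding_type (differential Phi).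
Proof.
  intros [[[s1 [s2 _]] _] [Hy [Hii [nu [[[n1 [n2 _]] [Hnu Himm]] Hnu0]]]]].
  assert (Hnu1 : c1 nu origin <> 0).
  { unfold c1. destruct Hnu0 as [E|E]; rewrite E; simpl; lra. }
  destruct (small_witness _
     (small_and _ _ (small_and _ _ (small_smooth _ s1) (small_smooth _ s2))
        (small_and _ _ (small_and _ _ (small_smooth _ n1) (small_smooth _ n2))
           (small_and _ _ (small_and _ _ (small_box _ Hy) (small_box _ Hnu))
              (small_nonzero _ n1 Hnu1)))))
    as [r [Hr [[S1 S2] [[N1 N2] [[Hyr Hnur] Hnz]]]]].
  exact (differential_pedal_on_box Phi nu r Hr S1 S2 N1 N2 Hyr Hii Hnur Himm Hnz Hnu0).
Qed.

Theorem proposition4 :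
  (forall (n : nat) (phi : Dom n -> Tgt n) (nf pf : Dom n -> R),
      pedal_data nf pf -> germ_eq phi (pedal_map nf pf) ->
      normalized_legendrian (integration nf pf)) /\
  (forall (n : nat) (Phi : Dom n -> Tgt n),
      normalized_legendrian Phi -> pedal_unfolding_type (differential Phi)).
Proof.
  split.
  - intros n phi nf pf Hpedal _. exact (integration_normalized nf pf Hpedal).
  - intros n Phi HPhi. exact (differential_pedal Phi HPhi).
Qed.
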